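(* Let $\mathbf{k}$ be a commutative noetherian ring, $M\ge0$, and let $I\subseteq\mathcal{P}_M$ be an ideal. Then $\mathrm{init}(I)$ is a monomial ideal of $\mathcal{P}_M$.
   Context: Notation: $\mathcal{P}_{d,n}=(\bigwedge^d\mathbf{k}^{Md})^{\otimes n}$, $\mathcal{P}_M=\bigoplus_{d,n\ge0}\mathcal{P}_{d,n}$, with standard basis $v_1,\dots,v_{Md}$ of $\mathbf{k}^{Md}$ and $v_S=v_{s_1}\wedge\cdots\wedge v_{s_d}$ for $S=\{s_1<\dots<s_d\}\subseteq[Md]$; monomials are $c\,v_{S^1}\otimes\cdots\otimes v_{S^n}$, $c\in\mathbf k$. Products: for a split $\sigma=(A,B)$ of $[n+m]$ (complementary subsets $A=\{i_1<\dots<i_n\}$, $B=\{j_1<\dots<j_m\}$), $(u_1\otimes\cdots\otimes u_n)\cdot_\sigma(w_1\otimes\cdots\otimes w_m)=z_1\otimes\cdots\otimes z_{n+m}$ with $z_{i_k}=u_k$, $z_{j_k}=w_k$ (bilinear; $0$ if bidegrees do not fit). For $g$ a strictly increasing map $\mathbf N\to\mathbf N$ and $f\in\mathcal{P}_{d,n}$, $h\in\mathcal{P}_{e,n}$: $f\ast_g h=0$ unless $g([Md])\subseteq[M(d+e)]$, in which case with $g^c:[Me]\to[M(d+e)]$ the increasing bijection onto $[M(d+e)]\setminus g([Md])$, $(v_{S^1}\otimes\cdots\otimes v_{S^n})\ast_g(v_{T^1}\otimes\cdots\otimes v_{T^n})=\bigotimes_i (v_{g(s^i_1)}\wedge\cdots\wedge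 v_{g(s^i_d)}\wedge v_{g^c(t^i_1)}\wedge\cdots\wedge v_{g^c(t^i_e)})$ (bilinear; $0$ for different numbers of tensor factors). An ideal is a $\mathbf{k}$-submodule $I=\bigoplus_{d,n}(I\cap\mathcal{P}_{d,n})$ with $f\ast_g h\in I$ and $h\cdot_\sigma f\in I$ for all $f\in I$, $h\in\mathcal P$, $g$, $\sigma$; a monomial ideal is an ideal generated by monomials. Monomial order: encode the basis monomial $v_{S^1}\otimes\cdots\otimes v_{S^n}$ of bidegree $(d,n)$ as the element $(S^1,\dots,S^n)\in(\mathbf{Z}^d)^n$, each $S^i$ written as its increasing sequence of entries; order $\mathbf Z^d$ lexicographically and then $(\mathbf Z^d)^n$ lexicographically; call this total order $\preceq$ (only monomials of the same bidegree are compared). For $f\in\mathcal{P}_{d,n}$ nonzero, $\mathrm{init}(f)$ is the $\preceq$-largest basis monomial occurring in $f$ with nonzero coefficient, together with that coefficient. For an ideal $I$, $\mathrm{init}(I)$ is the $\mathbf k$-span of $\{\mathrm{init}(f): f\in I\cap\mathcal P_{d,n}$ for some $d,n\}$. *)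

From HB Require Import structures.
From mathcomp Require Import all_boot all_order all_algebra.
Set Implicit Arguments. Unset Strict Implicit. Unset Printing Implicit Defensive.
Import Order.TTheory GRing.Theory Num.Theory.
Local Open Scope ring_scope.

Definition ring_ideal (k : comPzRingType) (J : k -> Prop) : Prop :=
  [/\ J 0, (forall x y, J x -> J y -> J (x + y)) & (forall a x, J x -> J (a * x))].

Definition noetherian (k : comPzRingType) : Prop :=
  forall J : nat -> k -> Prop,
    (forall i, ring_ideal (J i)) ->
    (forall i x, J i x -> J i.+1 x) ->
    exists N : nat, forall i, (N <= i)%N -> forall x, J i x -> J N x.

(* indices of k^{Md} are 0-based: 'I_(M*d) stands for [Md] = {1,..,Md} *)
Definition dsub (M d : nat) := {S : {set 'I_(M * d)} | #|S| == d}.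
(* basis monomials v_{S^1} (x) ... (x) v_{S^n} of P_{d,n} *)
Definition Bas (M d n : nat) := {ffun 'I_n -> dsub M d}.
(* elements of P_{d,n}: coefficient vectors on the (finite) standard basis *)
Definition Pol (k : comPzRingType) (M d n : nat) := {ffun Bas M d n -> k}.

Section Ops.
Variables (k : comPzRingType) (M : nat).

Definition padd d n (f h : Pol k M d n) : Pol k M d n := [ffun b => f b + h b].
Definition pscale d n (a : k) (f : Pol k M d n) : Pol k M d n := [ffun b => a * f b].
Definition pzero d n : Pol k M d n := [ffun => 0].
Definition monom d n (c : k) (m : Bas M d n) : Pol k M d n :=
  [ffun b => if b == m then c else 0].

(* i_A : 'I_n -> 'I_(n+m) the increasing enumeration of A (meaningful when #|A| = n),
   j_B : 'I_m -> 'I_(n+m) the increasing enumeration of the complement B *)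
Definition iA n m (A : {set 'I_(n + m)}) (x : 'I_n) : 'I_(n + m) :=
  nth (lshift m x) (enum A) x.
Definition jB n m (A : {set 'I_(n + m)}) (x : 'I_m) : 'I_(n + m) :=
  nth (rshift n x) (enum (~: A)) x.
(* (u_1..u_n) ._sigma (w_1..w_m) = z with z_{i_k} = u_k, z_{j_k} = w_k; since
   this is a bijection of bases, the coefficient of z in the bilinear extension is
   (coefficient of z o i_A in the left factor) * (coefficient of z o j_B in the right) *)
Definition psplit d n m (A : {set 'I_(n + m)}) (u : Pol k M d n) (w : Pol k M d m)
  : Pol k M d (n + m) :=
  [ffun z : Bas M d (n + m) =>
     u [ffun x => z (iA A x)] * w [ffun x => z (jB A x)]].

Lemma le_Md_Mde d e : (M * d <= M * (d + e))%N.
Proof. by rewrite leq_mul2l leq_addr orbT. Qed.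
Lemma le_Me_Mde d e : (M * e <= M * (d + e))%N.
Proof. by rewrite leq_mul2l leq_addl orbT. Qed.

Definition gfits (g : nat -> nat) d e : bool :=
  [forall x : 'I_(M * d), (g x < M * (d + e))%N].
Definition gI (g : nat -> nat) d e (x : 'I_(M * d)) : 'I_(M * (d + e)) :=
  insubd (widen_ord (le_Md_Mde d e) x) (g x).
Definition gimg (g : nat -> nat) d e : {set 'I_(M * (d + e))} :=
  [set @gI g d e x | x : 'I_(M * d)].
(* g^c : the increasing bijection [Me] -> [M(d+e)] \ g([Md]) *)
Definition gcI (g : nat -> nat) d e (t : 'I_(M * e)) : 'I_(M * (d + e)) :=
  nth (widen_ord (le_Me_Mde d e) t) (enum (~: @gimg g d e)) t.

Definition wimg (g : nat -> nat) d e (S : dsub M d) (T : dsub M e)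
  : {set 'I_(M * (d + e))} :=
  [set @gI g d e s | s in val S] :|: [set @gcI g d e t | t in val T].
(* number of transpositions needed to sort g(s_1),..,g(s_d),g^c(t_1),..,g^c(t_e)
   increasingly (each block is already increasing) *)
Definition winv (g : nat -> nat) d e (S : dsub M d) (T : dsub M e) : nat :=
  #|[set st : 'I_(M * d) * 'I_(M * e) |
      [&& st.1 \in val S, st.2 \in val T & (@gcI g d e st.2 < @gI g d e st.1)%N]]|.

(* bilinear extension of
   (v_{S^i})_i *_g (v_{T^i})_i = (x)_i v_{g(S^i)} /\ v_{g^c(T^i)}
                              = (prod_i sign_i) v_{g(S^1) u g^c(T^1)} (x) ... ;
   zero unless g([Md]) is contained in [M(d+e)] *)
Definition pstar (g : nat -> nat) d e n (f : Pol k M d n) (h : Pol k M e n)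
  : Pol k M (d + e) n :=
  [ffun z : Bas M (d + e) n =>
    if @gfits g d e then
      \sum_(b1 : Bas M d n) \sum_(b2 : Bas M e n)
        (if [forall i, @wimg g d e (b1 i) (b2 i) == val (z i)]
         then (-1) ^+ (\sum_(i < n) @winv g d e (b1 i) (b2 i)) * f b1 * h b2
         else 0)
    else 0].

(* ----- ideals of P_M, given by their homogeneous components ----- *)
Definition PIdeal := forall d n : nat, Pol k M d n -> Prop.

Definition strictly_increasing (g : nat -> nat) : Prop :=
  forall x y, (x < y)%N -> (g x < g y)%N.

Definition is_ideal (I : PIdeal) : Prop :=
  [/\ (forall d n, I d n (pzero d n)),
      (forall d n f h, I d n f -> I d n h -> I d n (padd f h)),
      (forall d n a f, I d n f -> I d n (pscale a f)),
      (forall g d e n (f : Pol k M d n) (h : Pol k M e n),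
          strictly_increasing g -> I d n f -> I (d + e) n (pstar g f h)) &
      (forall d n m (A : {set 'I_(n + m)}) (h : Pol k M d n) (f : Pol k M d m),
          #|A| = n -> I d m f -> I d (n + m) (psplit A h f))].

Definition gen_ideal (G : PIdeal) : PIdeal :=
  fun d n f => forall J : PIdeal, is_ideal J ->
    (forall d' n' p, G d' n' p -> J d' n' p) -> J d n f.

Definition is_monomial d n (p : Pol k M d n) : Prop :=
  exists (c : k) (m : Bas M d n), p = monom c m.

Definition monomial_ideal (I : PIdeal) : Prop :=
  exists G : PIdeal, (forall d n p, G d n p -> is_monomial p) /\
    (forall d n f, I d n f <-> @gen_ideal G d n f).

Fixpoint lexlt (T : eqType) (lt : rel T) (s t : seq T) : bool :=
  match s, t with
  | _, [::] => false
  | [::], _ :: _ => true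
  | x :: s', y :: t' => lt x y || ((x == y) && lexlt lt s' t')
  end.

Definition bkey d n (b : Bas M d n) : seq (seq nat) :=
  [seq [seq nat_of_ord x | x <- enum (val (b i))] | i <- enum 'I_n].

Definition mlt d n (b b' : Bas M d n) : bool :=
  lexlt (lexlt ltn) (bkey b) (bkey b').

Definition is_lead d n (f : Pol k M d n) (m : Bas M d n) : Prop :=
  f m != 0 /\ forall m', f m' != 0 -> m' = m \/ mlt m' m.

Inductive kspan d n (S : Pol k M d n -> Prop) : Pol k M d n -> Prop :=
  | kspan0 : kspan S (pzero d n)
  | kspanS a x y : S x -> kspan S y -> kspan S (padd (pscale a x) y).

Definition init_ideal (I : PIdeal) : PIdeal :=
  fun d n => kspan (fun p => exists f m, I d n f /\ is_lead f m /\ p = monom (f m) m).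

End Ops.

From HB Require Import structures.
From mathcomp Require Import all_boot all_order all_algebra.
From mathcomp Require Import zify.
Set Implicit Arguments. Unset Strict Implicit. Unset Printing Implicit Defensive.

(* init(I) is spanned by the monomials init(f), f in I, so it is a monomial ideal as
   soon as it is an ideal.  Fixing one factor of either product to be a basis monomial
   gives a linear map sending each basis monomial to a multiple of at most one basis
   monomial, strictly monotonically for the monomial order: on one tensor factor, the
   least element of the symmetric difference of two d-subsets S, S' is carried by g to
   that of g(S) u g^c(T) and g(S') u g^c(T), because g^c only fills the gaps of g([Md]).
   Such a map sends init(f) to 0 or to the initial term of the image of f, so init(I) is
   closed under both products. *)

Lemma lexlt_irr (T : eqType) (lt : rel T) : irreflexive lt -> irreflexive (lexlt lt).
Proof. by move=> lt_irr; elim=> //= x s ->; rewrite lt_irr eqxx. Qed.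

Lemma lexltP (T : eqType) (lt : rel T) (x0 : T) s t : size s = size t ->
  lexlt lt s t <-> exists i, [/\ (i < size s)%N,
    forall j, (j < i)%N -> nth x0 s j = nth x0 t j & lt (nth x0 s i) (nth x0 t i)].
Proof.
elim: s t => [|x s IH] [|y t] //=; first by move=> _; split=> // -[i []].
move=> [/IH {}IH]; split.
- case/orP=> [lt_xy|/andP[/eqP-> /IH[i [lt_i eq_below lt_at]]]]; first by exists 0%N; split.
  by exists i.+1; split=> // -[|j] //= /eq_below.
- case=> -[|i] [lt_i eq_below lt_at] /=; first by rewrite lt_at.
  have /= -> := eq_below 0%N erefl; apply/orP; right; rewrite eqxx; apply/IH.
  by exists i; split=> // j lt_ji; apply: (eq_below j.+1).
Qed.

Lemma notin_below_head (x y : nat) s : all (ltn x) s -> (y <= x)%N -> (y \in s) = false.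
Proof. by move=> /allP s_gt_x le_yx; apply/negbTE/negP=> /s_gt_x /=; lia. Qed.

Lemma lexlt_sortedP (s t : seq nat) : sorted ltn s -> sorted ltn t -> size s = size t ->
  lexlt ltn s t <->
  exists x, [/\ x \in s, x \notin t & forall y, (y < x)%N -> (y \in s) = (y \in t)].
Proof.
elim: s t => [|x s IH] [|y t] //=; first by move=> *; split=> // -[? []].
rewrite !(path_sortedE ltn_trans) => /andP[s_gt_x sort_s] /andP[t_gt_y sort_t] [size_st].
have {}IH := IH _ sort_s sort_t size_st.
case: (ltngtP x y) => [lt_xy|lt_yx|eq_xy] /=.
- split=> // _; exists x; split; first exact: mem_head.
  + by rewrite in_cons negb_or neq_ltn lt_xy (notin_below_head t_gt_y) // ltnW.
  + move=> z lt_zx; have lt_zy := ltn_trans lt_zx lt_xy.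
    by rewrite !in_cons !ltn_eqF //= (notin_below_head s_gt_x) ?(notin_below_head t_gt_y) // ltnW.
- split=> // -[w [s_w t_w agree]].
  have le_xw : (x <= w)%N.
    by move: s_w; rewrite in_cons => /orP[/eqP->//|/(allP s_gt_x)/ltnW].
  have := agree y (leq_trans lt_yx le_xw).
  by rewrite mem_head in_cons ltn_eqF //= (notin_below_head s_gt_x (ltnW lt_yx)).
- subst y; rewrite IH; split=> -[w [s_w t_w agree]].
  + exists w; split; [by rewrite in_cons s_w orbT| |by move=> z /agree; rewrite !in_cons => ->].
    rewrite in_cons negb_or t_w andbT; apply: contraNneq t_w => w_x.
    by move: s_w; rewrite w_x (notin_below_head s_gt_x).
  + have w_x : w != x by apply: contraNneq t_w => ->; apply: mem_head.
    move: s_w t_w; rewrite !in_cons (negbTE w_x) /= => s_w t_w.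
    exists w; split=> // z lt_zw; move: (agree z lt_zw); rewrite !in_cons.
    case: eqP => //= -> _.
    by rewrite (notin_below_head s_gt_x (leqnn x)) (notin_below_head t_gt_y (leqnn x)).
Qed.

Lemma sorted_enum_ord N (S : {set 'I_N}) : sorted (relpre (@nat_of_ord N) ltn) (enum S).
Proof.
have sorted_ord : sorted (relpre (@nat_of_ord N) ltn) (enum 'I_N).
  by rewrite -sorted_map val_enum_ord iota_ltn_sorted.
by rewrite /enum_mem -enumT; apply: sorted_filter => // a b c; apply: ltn_trans.
Qed.

Definition skey N (S : {set 'I_N}) : seq nat := [seq nat_of_ord x | x <- enum S].

Lemma skey_sorted N (S : {set 'I_N}) : sorted ltn (skey S).
Proof. by rewrite sorted_map sorted_enum_ord. Qed.

Lemma mem_skey N (S : {set 'I_N}) (x : 'I_N) : (nat_of_ord x \in skey S) = (x \in S).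
Proof. by rewrite (mem_map val_inj) mem_enum. Qed.

Lemma size_skey N (S : {set 'I_N}) : size (skey S) = #|S|.
Proof. by rewrite size_map cardE. Qed.

Lemma skey_inj N : injective (@skey N).
Proof. by move=> S S' eq_key; apply/setP=> x; rewrite -!mem_skey eq_key. Qed.

Definition least_diff N (S S' : {set 'I_N}) (x : 'I_N) : Prop :=
  [/\ x \in S, x \notin S' & forall y : 'I_N, (y < x)%N -> (y \in S) = (y \in S')].

Lemma skey_ltP N (S S' : {set 'I_N}) : #|S| = #|S'| ->
  lexlt ltn (skey S) (skey S') <-> exists x, least_diff S S' x.
Proof.
move=> eq_card; rewrite lexlt_sortedP ?skey_sorted ?size_skey //; split=> -[x [Sx S'x agree]].
- have /mapP[ox _ eq_x] := Sx; subst x.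
  exists ox; rewrite /least_diff -!mem_skey; split=> // y lt_yx.
  by rewrite -!mem_skey agree.
- exists (nat_of_ord x); rewrite !mem_skey; split=> // y lt_yx.
  have lt_yN : (y < N)%N := ltn_trans lt_yx (ltn_ord x).
  by have := agree (Ordinal lt_yN) lt_yx; rewrite -!mem_skey.
Qed.

Lemma nth_map_enum_ord (T : Type) n (F : 'I_n -> T) x0 (i : 'I_n) :
  nth x0 [seq F j | j <- enum 'I_n] i = F i.
Proof. by rewrite (nth_map i) ?size_enum_ord // nth_ord_enum. Qed.

Lemma mltP M d n (b b' : Bas M d n) :
  mlt b b' <-> exists i : 'I_n, (forall j : 'I_n, (j < i)%N -> b j = b' j) /\
      lexlt ltn (skey (val (b i))) (skey (val (b' i))).
Proof.
rewrite /mlt /bkey (lexltP _ [::]) ?size_map // -enumT size_enum_ord; split.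
- case=> i [lt_in eq_below].
  rewrite -[i]/(nat_of_ord (Ordinal lt_in)) !nth_map_enum_ord => lt_at.
  exists (Ordinal lt_in); split=> // j lt_ji; apply/val_inj/skey_inj.
  by have := eq_below j lt_ji; rewrite !nth_map_enum_ord.
- case=> i [eq_below lt_at]; exists (nat_of_ord i).
  rewrite !nth_map_enum_ord; split=> // j lt_ji.
  have lt_jn : (j < n)%N := ltn_trans lt_ji (ltn_ord i).
  rewrite -[j]/(nat_of_ord (Ordinal lt_jn)) !nth_map_enum_ord.
  by rewrite (eq_below (Ordinal lt_jn)).
Qed.

Lemma mlt_irr M d n : irreflexive (@mlt M d n).
Proof. by move=> b; rewrite /mlt !lexlt_irr // => s; apply: lexlt_irr; apply: ltnn. Qed.

Section Embedding.
Variables (M : nat) (g : nat -> nat) (d e : nat).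
Hypotheses (g_fits : gfits M g d e) (g_incr : strictly_increasing g).

Lemma gI_val (x : 'I_(M * d)) : nat_of_ord (gI g e x) = g x.
Proof. by rewrite /gI val_insubd (forallP g_fits x). Qed.

Lemma ltn_gI (x y : 'I_(M * d)) : (gI g e x < gI g e y)%N = (x < y)%N.
Proof.
rewrite !gI_val; apply/idP/idP; last exact: g_incr.
by case: (ltngtP x y) => // [/g_incr/ltn_trans lt_gyx /lt_gyx|/val_inj->]; rewrite ltnn.
Qed.

Lemma gI_inj : injective (@gI M g d e).
Proof.
move=> x y eq_gxy; apply/val_inj.
by case: (ltngtP x y) => // lt; have := lt; rewrite -ltn_gI eq_gxy ltnn.
Qed.

Lemma gcI_notin_gimg (t : 'I_(M * e)) : gcI g d t \notin gimg M g d e.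
Proof.
have card_compl : #|~: gimg M g d e| = (M * e)%N.
  have := cardsC (gimg M g d e); rewrite card_imset; last exact: gI_inj.
  by rewrite !card_ord; have := mulnDr M d e; lia.
have : gcI g d t \in enum (~: gimg M g d e) by rewrite mem_nth // -cardE card_compl.
by rewrite mem_enum inE.
Qed.

Lemma wimg_least_diff (S S' : dsub M d) (T : dsub M e) (x : 'I_(M * d)) :
  least_diff (val S) (val S') x -> least_diff (wimg g S T) (wimg g S' T) (gI g e x).
Proof.
case=> S_x S'_x agree; rewrite /wimg; split.
- by rewrite in_setU imset_f.
- rewrite in_setU negb_or (mem_imset _ _ gI_inj) S'_x /=; apply/imsetP=> -[u _ eq_u].
  by have := gcI_notin_gimg u; rewrite -eq_u imset_f.
- move=> y lt_y; rewrite !in_setU; congr orb.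
  have in_gimg A : y \in [set gI g e s | s in A] -> y \in gimg M g d e.
    by case/imsetP=> s _ ->; rewrite imset_f.
  case gimg_y: (y \in gimg M g d e); last first.
    by apply/idP/idP=> /in_gimg; rewrite gimg_y.
  case/imsetP: gimg_y lt_y => s _ -> lt_s; rewrite !(mem_imset _ _ gI_inj).
  by apply: agree; rewrite -ltn_gI.
Qed.

End Embedding.

Section SplitEnumeration.
Variables (n m : nat) (A : {set 'I_(n + m)}).
Hypothesis card_A : #|A| = n.

Lemma size_enum_compl : size (enum (~: A)) = m.
Proof. by rewrite -cardE; have := cardsC A; rewrite card_A card_ord; lia. Qed.

Lemma split_cover p : (exists x, p = iA A x) \/ (exists y, p = jB A y).
Proof.
case A_p: (p \in A); [left | right].
- have lt_in : (index p (enum A) < n)%N.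
    by rewrite -[X in (_ < X)%N]card_A cardE index_mem mem_enum.
  by exists (Ordinal lt_in); rewrite /iA nth_index ?mem_enum.
- have lt_im : (index p (enum (~: A)) < m)%N.
    by rewrite -[X in (_ < X)%N]size_enum_compl index_mem mem_enum inE A_p.
  by exists (Ordinal lt_im); rewrite /jB nth_index // mem_enum inE A_p.
Qed.

Lemma ltn_jB (y y' : 'I_m) : (jB A y < jB A y')%N = (y < y')%N.
Proof.
have jB_mono (u v : 'I_m) : (u < v)%N -> (jB A u < jB A v)%N.
  move=> lt_uv; rewrite /jB (set_nth_default (rshift n v) (rshift n u)) ?size_enum_compl //.
  have ltn_trans' : transitive (relpre (@nat_of_ord (n + m)) ltn).
    by move=> ? ? ?; apply: ltn_trans.
  by apply: (sorted_ltn_nth ltn_trans' _ (sorted_enum_ord (~: A))); rewrite ?inE ?size_enum_compl.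
apply/idP/idP; last exact: jB_mono.
by case: (ltngtP y y') => // [/jB_mono/ltn_trans lt_y /lt_y|/val_inj->]; rewrite ltnn.
Qed.

End SplitEnumeration.

Import GRing.Theory.
Local Open Scope ring_scope.

Section Span.
Variables (k : comPzRingType) (M d n : nat).
Implicit Types (S : Pol k M d n -> Prop) (x y : Pol k M d n).

Lemma monom0 (m : Bas M d n) : monom 0 m = pzero k M d n.
Proof. by apply/ffunP=> z; rewrite !ffunE if_same. Qed.

Lemma kspan_add S x y : kspan S x -> kspan S y -> kspan S (padd x y).
Proof.
elim=> [|a x1 y1 S_x1 _ IH] span_y.
  by have -> : padd (pzero k M d n) y = y by apply/ffunP=> b; rewrite !ffunE add0r.
have -> : padd (padd (pscale a x1) y1) y = padd (pscale a x1) (padd y1 y).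
  by apply/ffunP=> b; rewrite !ffunE addrA.
by constructor=> //; apply: IH.
Qed.

Lemma kspan_scale S a x : kspan S x -> kspan S (pscale a x).
Proof.
elim=> [|b x1 y1 S_x1 _ IH].
  have -> : pscale a (pzero k M d n) = pzero k M d n by apply/ffunP=> z; rewrite !ffunE mulr0.
  exact: kspan0.
have -> : pscale a (padd (pscale b x1) y1) = padd (pscale (a * b) x1) (pscale a y1).
  by apply/ffunP=> z; rewrite !ffunE mulrDr mulrA.
by constructor.
Qed.

Lemma kspan_gen S x : S x -> kspan S x.
Proof.
move=> S_x; have -> : x = padd (pscale 1 x) (pzero k M d n).
  by apply/ffunP=> z; rewrite !ffunE mul1r addr0.
by constructor=> //; apply: kspan0.
Qed.

Lemma kspan_sub S (S' : Pol k M d n -> Prop) x : (forall y, S y -> kspan S' y) -> kspan S x -> kspan S' x.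
Proof.
move=> sub_SS'; elim=> [|a x1 y1 S_x1 _ IH]; first exact: kspan0.
by apply: kspan_add => //; apply/kspan_scale/sub_SS'.
Qed.

Lemma kspan_sum S (T : Type) (s : seq T) (F : T -> Pol k M d n) :
  (forall t, kspan S (F t)) -> kspan S [ffun z => \sum_(t <- s) F t z].
Proof.
move=> span_F; elim: s => [|t s IH].
  have -> : [ffun z => \sum_(t <- [::]) F t z] = pzero k M d n.
    by apply/ffunP=> z; rewrite !ffunE big_nil.
  exact: kspan0.
have -> : [ffun z => \sum_(u <- t :: s) F u z] = padd (F t) [ffun z => \sum_(u <- s) F u z].
  by apply/ffunP=> z; rewrite !ffunE big_cons.
exact: kspan_add.
Qed.

End Span.

Section RelationalMap.
Variables (k : comPzRingType) (M d n d' n' : nat).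
Variables (R : Bas M d n -> Bas M d' n' -> bool) (c : Bas M d n -> k).

Definition relmap (f : Pol k M d n) : Pol k M d' n' :=
  [ffun z => \sum_b (if R b z then c b * f b else 0)].

Lemma relmap0 : relmap (pzero k M d n) = pzero k M d' n'.
Proof. by apply/ffunP=> z; rewrite !ffunE big1 // => b _; rewrite ffunE mulr0; case: ifP. Qed.

Lemma relmap_comb a x y :
  relmap (padd (pscale a x) y) = padd (pscale a (relmap x)) (relmap y).
Proof.
apply/ffunP=> z; rewrite !ffunE mulr_sumr -big_split /=; apply: eq_bigr => b _.
by rewrite !ffunE; case: ifP => _; rewrite ?mulr0 ?addr0 // mulrDr mulrCA.
Qed.

Lemma relmap_kspan (S : Pol k M d n -> Prop) (S' : Pol k M d' n' -> Prop) p :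
  (forall x, S x -> kspan S' (relmap x)) -> kspan S p -> kspan S' (relmap p).
Proof.
move=> span_S; elim=> [|a x y S_x _ IH]; first by rewrite relmap0; apply: kspan0.
by rewrite relmap_comb; apply: kspan_add => //; apply/kspan_scale/span_S.
Qed.

Lemma relmap_monom a m z : relmap (monom a m) z = if R m z then c m * a else 0.
Proof.
rewrite ffunE (bigD1 m) //= ffunE eqxx big1 ?addr0 // => b /negbTE b_m.
by rewrite ffunE b_m mulr0; case: ifP.
Qed.

Hypothesis R_fun : forall b z z', R b z -> R b z' -> z = z'.
Hypothesis R_mono : forall b b' z z', R b z -> R b' z' -> mlt b b' -> mlt z z'.

Section Lead.
Variables (f : Pol k M d n) (m : Bas M d n) (z0 : Bas M d' n').
Hypotheses (lead_m : is_lead f m) (R_m : R m z0).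

Lemma relmap_lead_coef : relmap f z0 = c m * f m.
Proof.
case: lead_m => _ below_m; rewrite ffunE (bigD1 m) //= R_m big1 ?addr0 // => b b_m.
case: (eqVneq (f b) 0) => [->|f_b]; first by rewrite mulr0; case: ifP.
case: (below_m b f_b) => [eq_bm|lt_bm]; first by rewrite eq_bm eqxx in b_m.
by case R_b: (R b z0) => //; have := R_mono R_b R_m lt_bm; rewrite mlt_irr.
Qed.

Lemma relmap_lead_monom : relmap (monom (f m) m) = monom (relmap f z0) z0.
Proof.
apply/ffunP=> z; rewrite relmap_monom ffunE relmap_lead_coef.
case: ifP => [R_z|]; first by rewrite (R_fun R_z R_m) eqxx.
by case: eqP => // ->; rewrite R_m.
Qed.

Lemma relmap_is_lead : relmap f z0 != 0 -> is_lead (relmap f) z0.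
Proof.
case: lead_m => _ below_m nz; split=> // z' nz'.
have [b /andP[R_b f_b]] : exists b, R b z' && (f b != 0).
  apply/existsP; apply: contraNT nz' => /existsPn none.
  rewrite ffunE big1 // => b _; move: (none b); case: (R b z') => //= /negPn/eqP->.
  by rewrite mulr0.
case: (below_m b f_b) => [eq_bm|lt_bm]; last by right; apply: R_mono R_b R_m lt_bm.
by left; rewrite eq_bm in R_b; apply: R_fun R_b R_m.
Qed.

End Lead.

Lemma init_ideal_relmap (I : PIdeal k M) :
  (forall f, I d n f -> I d' n' (relmap f)) ->
  forall p, init_ideal I p -> init_ideal I (relmap p).
Proof.
move=> I_relmap p; apply: relmap_kspan => _ [f [m [I_f [lead_m ->]]]].
case: (pickP (R m)) => [z0 R_m|no_R].
  rewrite (relmap_lead_monom lead_m R_m); case: (eqVneq (relmap f z0) 0) => [->|nz].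
    by rewrite monom0; apply: kspan0.
  apply: kspan_gen; exists (relmap f), z0; split=> //; first exact: I_relmap.
  exact: conj (relmap_is_lead lead_m R_m nz) erefl.
rewrite (_ : relmap _ = pzero k M d' n'); first exact: kspan0.
by apply/ffunP=> z; rewrite relmap_monom no_R ffunE.
Qed.

End RelationalMap.

Lemma card_dsub M d (S : dsub M d) : #|val S| = d.
Proof. exact: eqP (valP S). Qed.

Section StarProduct.
Variables (k : comPzRingType) (M : nat) (g : nat -> nat) (d e n : nat).

Definition star_rel (t : Bas M e n) (b : Bas M d n) (z : Bas M (d + e) n) : bool :=
  [forall i, wimg g (b i) (t i) == val (z i)].

Definition star_coef (t : Bas M e n) (a : k) (b : Bas M d n) : k :=
  (-1) ^+ (\sum_(i < n) winv g (b i) (t i)) * a.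

Lemma pstar_monomr (f : Pol k M d n) a t : gfits M g d e ->
  pstar g f (monom a t) = relmap (star_rel t) (star_coef t a) f.
Proof.
move=> g_fits; apply/ffunP=> z; rewrite !ffunE g_fits; apply: eq_bigr => b _.
rewrite (bigD1 t) //= [X in _ + X = _]big1 ?addr0; last first.
  by move=> t' /negbTE t'_t; rewrite ffunE t'_t mulr0; case: ifP.
by rewrite ffunE eqxx /star_rel /star_coef; case: ifP => // _; rewrite -!mulrA (mulrC (f b)).
Qed.

Lemma pstar_nofit (f : Pol k M d n) (h : Pol k M e n) :
  ~~ gfits M g d e -> pstar g f h = pzero k M (d + e) n.
Proof. by move/negbTE=> g_nofit; apply/ffunP=> z; rewrite !ffunE g_nofit. Qed.

Lemma pstar_sum_monomr (f : Pol k M d n) (h : Pol k M e n) :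
  pstar g f h = [ffun z => \sum_(t <- index_enum (Bas M e n)) pstar g f (monom (h t) t) z].
Proof.
apply/ffunP=> z; rewrite !ffunE.
case g_fits: (gfits M g d e); last by rewrite big1 // => t _; rewrite ffunE g_fits.
rewrite exchange_big /=; apply: eq_bigr => t _.
rewrite pstar_monomr // ffunE; apply: eq_bigr => b _.
by rewrite /star_rel /star_coef; case: ifP => // _; rewrite -!mulrA (mulrC (f b)).
Qed.

Lemma star_rel_fun t b z z' : star_rel t b z -> star_rel t b z' -> z = z'.
Proof.
move=> /forallP img_z /forallP img_z'; apply/ffunP=> i; apply/val_inj.
by rewrite -(eqP (img_z i)) (eqP (img_z' i)).
Qed.

Lemma star_rel_mono t b b' z z' : gfits M g d e -> strictly_increasing g ->
  star_rel t b z -> star_rel t b' z' -> mlt b b' -> mlt z z'.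
Proof.
move=> g_fits g_incr /forallP img_z /forallP img_z' /mltP[i [eq_below lt_at]].
apply/mltP; exists i; split=> [j lt_ji|].
  by apply/val_inj; rewrite -(eqP (img_z j)) -(eqP (img_z' j)) eq_below.
move: lt_at; rewrite !skey_ltP ?card_dsub // => -[x diff_x].
by exists (gI g e x); rewrite -(eqP (img_z i)) -(eqP (img_z' i)); apply: wimg_least_diff.
Qed.

End StarProduct.

Section SplitProduct.
Variables (k : comPzRingType) (M d n m : nat) (A : {set 'I_(n + m)}).

Definition split_rel (u : Bas M d n) (w : Bas M d m) (z : Bas M d (n + m)) : bool :=
  ([ffun x => z (iA A x)] == u) && ([ffun y => z (jB A y)] == w).

Lemma psplit_monoml (a : k) u (f : Pol k M d m) :
  psplit A (monom a u) f = relmap (split_rel u) (fun=> a) f.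
Proof.
apply/ffunP=> z; rewrite ffunE [RHS]ffunE (bigD1 [ffun y => z (jB A y)]) //=.
rewrite [X in _ = _ + X]big1 ?addr0; last first.
  by move=> w /negbTE w_z; rewrite /split_rel [_ == w]eq_sym w_z andbF.
by rewrite /split_rel eqxx andbT ffunE; case: eqP; rewrite ?mul0r.
Qed.

Lemma psplit_sum_monoml (h : Pol k M d n) (f : Pol k M d m) :
  psplit A h f = [ffun z => \sum_(u <- index_enum (Bas M d n)) psplit A (monom (h u) u) f z].
Proof.
apply/ffunP=> z; rewrite !ffunE (bigD1 [ffun x => z (iA A x)]) //=.
rewrite [X in _ = _ + X]big1 ?addr0; first by rewrite !ffunE eqxx.
by move=> u /negbTE u_z; rewrite !ffunE eq_sym u_z mul0r.
Qed.

Hypothesis card_A : #|A| = n.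

Lemma split_rel_fun u w z z' : split_rel u w z -> split_rel u w z' -> z = z'.
Proof.
move=> /andP[/eqP/ffunP z_A /eqP/ffunP z_B] /andP[/eqP/ffunP z'_A /eqP/ffunP z'_B].
apply/ffunP=> p; case: (split_cover card_A p) => [[x ->]|[y ->]].
  by have := z_A x; rewrite -z'_A !ffunE.
by have := z_B y; rewrite -z'_B !ffunE.
Qed.

Lemma split_rel_mono u w w' z z' :
  split_rel u w z -> split_rel u w' z' -> mlt w w' -> mlt z z'.
Proof.
move=> /andP[/eqP/ffunP z_A /eqP/ffunP z_B] /andP[/eqP/ffunP z'_A /eqP/ffunP z'_B].
move=> /mltP[i [eq_below lt_at]].
have z_jB y : z (jB A y) = w y by rewrite -z_B ffunE.
have z'_jB y : z' (jB A y) = w' y by rewrite -z'_B ffunE.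
apply/mltP; exists (jB A i); split; last by rewrite z_jB z'_jB.
move=> p; case: (split_cover card_A p) => [[x ->]|[y ->]] lt_p.
  by have := z_A x; rewrite -z'_A !ffunE.
by rewrite z_jB z'_jB eq_below // -(ltn_jB card_A).
Qed.

End SplitProduct.

Section InitialIdeal.
Variables (k : comPzRingType) (M : nat).

Lemma init_ideal_is_ideal (I : PIdeal k M) : is_ideal I -> is_ideal (init_ideal I).
Proof.
case=> _ _ _ I_star I_split; split.
- by move=> d n; apply: kspan0.
- by move=> d n f h; apply: kspan_add.
- by move=> d n a f; apply: kspan_scale.
- move=> g d e n f h g_incr init_f.
  case g_fits: (gfits M g d e); last by rewrite pstar_nofit ?g_fits //; apply: kspan0.
  rewrite pstar_sum_monomr; apply: kspan_sum => t; rewrite pstar_monomr //.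
  apply: init_ideal_relmap init_f => [b z z'|b b' z z'|f' I_f'].
  + exact: star_rel_fun.
  + exact: star_rel_mono.
  + by rewrite -pstar_monomr //; apply: I_star.
- move=> d n m A h f card_A init_f.
  rewrite psplit_sum_monoml; apply: kspan_sum => u; rewrite psplit_monoml.
  apply: init_ideal_relmap init_f => [w z z'|w w' z z'|f' I_f'].
  + exact: split_rel_fun.
  + exact: split_rel_mono.
  + by rewrite -psplit_monoml; apply: I_split.
Qed.

Lemma monomial_ideal_of_span (J : PIdeal k M) : is_ideal J ->
  (forall d n f, J d n f -> kspan (fun p => J d n p /\ is_monomial p) f) ->
  monomial_ideal J.
Proof.
move=> ideal_J span_J; exists (fun d n p => J d n p /\ is_monomial p).
split=> [d n p [] //|d n f]; split=> [J_f K [K0 K_add K_scale _ _] G_K|gen_f].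
  elim: (span_J _ _ _ J_f) => [|a x y G_x _ K_y]; first exact: K0.
  by apply/K_add/K_y; apply/K_scale/G_K.
by apply: gen_f => // d' n' p [].
Qed.

End InitialIdeal.

Theorem mainTheorem10 (k : comPzRingType) (M : nat) (I : PIdeal k M) :
  noetherian k -> is_ideal I -> monomial_ideal (init_ideal I).
Proof.
move=> _ ideal_I; apply: monomial_ideal_of_span; first exact: init_ideal_is_ideal.
move=> d n f; apply: kspan_sub => _ [g [m [I_g [lead_m ->]]]].
apply: kspan_gen; split; last by exists (g m), m.
by apply: kspan_gen; exists g, m.
Qed.
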